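(* Let $X_1,\ldots,X_n$ be non-empty sets, $S\subset X_1\times\cdots\times X_n$ a finite set, and $M\subset S$ a maximal good subset of $S$. Let $C(S)$ be the space of functions on $S$, $U(S)$ the subspace of functions $f$ on $S$ of the form $f(x_1,\ldots,x_n)=u_1(x_1)+\cdots+u_n(x_n)$ on $S$ with $u_i$ functions on $\Pi_iS$, and $U(S)^\perp=\{\mu\in C(S)^*:\mu(f)=0\ \forall f\in U(S)\}$. Then $\dim U(S)^\perp=|S|-|M|$, and a basis of $U(S)^\perp$ is given by the set of measures $\mu_L$, where $L$ ranges over loops of the form $L=\{x,y_2,\ldots,y_k\}$ with $x\in S\setminus M$ and $y_2,\ldots,y_k\in M$.
   Context: $\Pi_i$ denotes the canonical projection onto $X_i$. A subset $T$ is good if every function $f$ on $T$ can be written as $f(x_1,\ldots,x_n)=u_1(x_1)+\cdots+u_n(x_n)$ on $T$ for suitable functions $u_i$ on $X_i$; $M$ is a maximal good subset of $S$ if it is good and no good subset of $S$ strictly contains it. For points $x_1,\ldots,x_k$ (with $x_j=(x_{j1},\ldots,x_{jn})$) and numbers $c_j$, the formal sum $\sum_jc_jx_j$ vanishes if for every $i$ and every $a\in X_i$, $\sum_{j:\,x_{ji}=a}c_j=0$. A non-empty finite set $L=\{x_1,\ldots,x_k\}$ of distinct points is a loop if there are non-zero integers $n_1,\ldots,n_k$ with $\sum_jn_jx_j$ vanishing and no strictly smaller non-empty subset of $L$ has this property; such integers can be taken with $\gcd=1$, uniquely up to a global sign. For such a loop, $\mu_L$ is the measure on $S$ with $\mu_L(x_j)=n_j/(|n_1|+\cdots+|n_k|)$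 and $\mu_L(x)=0$ for $x\notin L$ (for a fixed choice of sign). *)

From HB Require Import structures.
From mathcomp Require Import all_boot all_order all_algebra.
From mathcomp Require Import finmap.
Set Implicit Arguments. Unset Strict Implicit. Unset Printing Implicit Defensive.
Import Order.TTheory GRing.Theory Num.Theory.
Local Open Scope ring_scope.
Local Open Scope fset_scope.

Definition point (n : nat) (X : 'I_n -> choiceType) :=
  {dffun forall i : 'I_n, X i}.

Section Defs.
Variables (R : realFieldType) (n : nat) (X : 'I_n -> choiceType).
Local Notation P := (point X).

Definition good (T : {fset P}) : Prop :=
  forall f : T -> R, exists u : forall i : 'I_n, X i -> R,
    forall x : T, f x = \sum_(i < n) u i (val x i).

Definition maximal_good (S M : {fset P}) : Prop :=
  [/\ M `<=` S, good M &
      forall T : {fset P}, M `<` T -> T `<=` S -> ~ good T].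

(* The formal sum  sum_{x in L} c x * x  vanishes. *)
Definition vanishes (L : {fset P}) (c : P -> int) : Prop :=
  forall (i : 'I_n) (a : X i), \sum_(x <- L | x i == a) c x = 0.

Definition has_vanishing_nonzero_sum (L : {fset P}) : Prop :=
  exists c : P -> int, (forall x, x \in L -> c x != 0) /\ vanishes L c.

Definition is_loop (L : {fset P}) : Prop :=
  [/\ L != fset0, has_vanishing_nonzero_sum L &
      forall L' : {fset P}, L' != fset0 -> L' `<` L ->
        ~ has_vanishing_nonzero_sum L'].

Definition C (S : {fset P}) := {ffun S -> GRing.regular R}.

Definition inU (S : {fset P}) (f : C S) : Prop :=
  exists u : forall i : 'I_n, X i -> R,
    forall x : S, f x = \sum_(i < n) u i (val x i).

(* Measures on S (the dual of C(S)), acting by mu(f) = sum_x mu(x) f(x). *)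
Definition integrate (S : {fset P}) (mu f : C S) : R :=
  \sum_(x : S) mu x * f x.

Definition inUperp (S : {fset P}) (mu : C S) : Prop :=
  forall f : C S, inU f -> integrate mu f = 0.

(* mu is the measure mu_L of the loop L (for one of the two sign choices):
   mu(x_j) = n_j / (|n_1|+...+|n_k|), with non-zero integers n_j of gcd 1
   such that sum_j n_j x_j vanishes, and mu = 0 off L. *)
Definition is_loop_measure (S : {fset P}) (L : {fset P}) (mu : C S) : Prop :=
  exists c : P -> int,
    [/\ forall x, x \in L -> c x != 0,
        vanishes L c,
        (forall d : nat, (forall x, x \in L -> (d %| `|c x|)%N) -> d = 1%N) &
        forall x : S, mu x =
          if val x \in L then (c (val x))%:~R / (\sum_(y <- L) `|c y|%N)%:R
          else 0].

Definition admissible_loop (S M L : {fset P}) : Prop :=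
  is_loop L /\ exists x : P, [/\ x \in S, x \notin M, x \in L & L `\ x `<=` M].

End Defs.

(* Vanishing integer combinations on T are exactly the linear relations satisfied
   on T by all the functions sum_i u_i(x_i); as the incidence matrix between the
   points of T and the values (i, x_i) is rational, T is good iff every vanishing
   combination on T is trivial.  For x in S \ M, maximality makes x |` M bad while
   M is good, so the vanishing combinations on x |` M form a line, whose support is
   the unique admissible loop L_x through x.  The measure mu_{L_x} annihilates
   U(S) and, among the points of S \ M, charges only x: the mu_{L_x} are
   independent.  A measure in U(S)^perp that vanishes off the good set M is zero,
   so every such measure is the combination of the mu_{L_x} matching its values
   on S \ M. *)

From HB Require Import structures.
From mathcomp Require Import all_boot all_order all_algebra.
From mathcomp Require Import finmap.
From Stdlib Require Import ClassicalEpsilon.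
Import Order.TTheory GRing.Theory Num.Theory.
Set Implicit Arguments. Unset Strict Implicit. Unset Printing Implicit Defensive.
Local Open Scope ring_scope.
Local Open Scope fset_scope.

Lemma in_fset_sep (T : choiceType) (A : {fset T}) (p : pred T) y :
  (y \in [fset z in A | p z]) = (y \in A) && p y.
Proof. by rewrite !inE. Qed.

Lemma fset_enum_prop (T : choiceType) (A : {fset T}) (Q : T -> Prop) :
  (forall x, Q x -> x \in A) -> exists s : seq T, uniq s /\ forall x, x \in s <-> Q x.
Proof.
move=> QA; pose q x := if excluded_middle_informative (Q x) then true else false.
exists [seq x <- A | q x]; split; first exact/filter_uniq/fset_uniq.
move=> x; rewrite mem_filter /q.
by case: excluded_middle_informative => Qx; split=> // _; rewrite QA.
Qed.

Definition extend0 (T : choiceType) (A : {fset T}) (V : nmodType) (f : A -> V) :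
  T -> V := fun y => if insub y is Some t then f t else 0.

Lemma extend0E (T : choiceType) (A : {fset T}) (V : nmodType) (f : A -> V) (t : A) :
  extend0 f (val t) = f t.
Proof. by rewrite /extend0 valK. Qed.

Lemma sum_enum_rank (V : nmodType) (I : finType) (G : 'I_#|I| -> V) :
  \sum_j G j = \sum_(t : I) G (enum_rank t).
Proof. exact: (reindex enum_rank (onW_bij _ (enum_rank_bij I))). Qed.

Lemma rat_clear_denominators (I : finType) (q : I -> rat) :
  exists2 d : rat, d != 0 & exists c : I -> int, forall i, (c i)%:~R = q i * d.
Proof.
exists (\prod_i denq (q i))%:~R.
  by rewrite intr_eq0; apply/prodf_neq0 => i _; apply: denq_neq0.
exists (fun i => numq (q i) * \prod_(j | j != i) denq (q j)) => i.
by rewrite [in RHS](bigD1 i) //= !intrM numqE mulrA.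
Qed.

Section Vanishing.
Variables (n : nat) (X : 'I_n -> choiceType).
Local Notation P := (point X).

Lemma vanishes_fsubset (L T : {fset P}) (c : P -> int) : L `<=` T ->
  {in T, forall y, y \notin L -> c y = 0} -> vanishes L c <-> vanishes T c.
Proof.
move=> LT c0; have E i a : \sum_(y <- L | y i == a) c y = \sum_(y <- T | y i == a) c y.
  rewrite big_mkcond [RHS]big_mkcond; apply: big_fset_incl => // y yT yL.
  by rewrite c0 ?if_same.
by split=> Lc i a; [rewrite -E | rewrite E]; apply: Lc.
Qed.

Lemma vanishes_extend (L T : {fset P}) (c : P -> int) : L `<=` T ->
  vanishes L c -> vanishes T (fun y => if y \in L then c y else 0).
Proof.
move=> LT Lc; pose d y := if y \in L then c y else 0.
apply/(vanishes_fsubset (c := d) LT) => [y _ /negbTE yL|i a]; first by rewrite /d yL.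
rewrite -[RHS](Lc i a) big_seq_cond [RHS]big_seq_cond.
by apply: eq_bigr => y /andP[yL _]; rewrite /d yL.
Qed.

Lemma vanishes_primitive (L : {fset P}) (c : P -> int) : L != fset0 ->
  {in L, forall y, c y != 0} -> vanishes L c ->
  exists c' : P -> int, [/\ {in L, forall y, c' y != 0}, vanishes L c' &
    forall d : nat, (forall y, y \in L -> (d %| `|c' y|)%N) -> d = 1%N].
Proof.
move=> /fset0Pn[x xL] c_neq0 Lc.
pose g := \big[gcdn/0%N]_(t : L) `|c (val t)|%N.
have g_dvd y : y \in L -> (g %| `|c y|)%N.
  by move=> yL; apply: (dvdn_biggcdP _ _ _ (dvdnn g) [` yL]).
have g_neq0 : g%:Z != 0.
  apply: contraTneq (g_dvd x xL) => /eqP; rewrite eqz_nat => /eqP->.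
  by rewrite dvd0n absz_eq0 c_neq0.
have cK y : y \in L -> (c y %/ g%:Z)%Z * g%:Z = c y by move=> yL; apply/divzK/g_dvd.
exists (fun y => (c y %/ g%:Z)%Z); split.
- by move=> y yL; apply: contra_neq (c_neq0 y yL) => c'0; rewrite -cK // c'0 mul0r.
- move=> i a; apply: (mulIf g_neq0); rewrite mul0r -[RHS](Lc i a) mulr_suml.
  rewrite big_seq_cond [RHS]big_seq_cond.
  by apply: eq_bigr => y /andP[yL _]; rewrite cK.
- move=> d d_dvd; have : (d * g %| g)%N.
    apply/dvdn_biggcdP => t _.
    by rewrite -(cK _ (fsvalP t)) abszM dvdn_mul ?d_dvd ?fsvalP.
  by rewrite -{2}(mul1n g) dvdn_pmul2r ?lt0n // dvdn1 => /eqP.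
Qed.

(* Column (i, s) is the indicator of {t in T | t_i = s_i}: U(T) is the column space,
   and the vanishing combinations on T are the left kernel, up to denominators. *)
Definition incidence (F : nzRingType) (T : {fset P}) :
    'M[F]_(#|{: T}|, #|{: 'I_n * T}|) :=
  \matrix_(j, k)
    (let t : T := enum_val j in let: (i, s) := enum_val k : 'I_n * T in
     (val t i == val s i)%:R).

Lemma incidenceE (F : nzRingType) (T : {fset P}) (t s : T) (i : 'I_n) :
  incidence F T (enum_rank t) (enum_rank (i, s)) = (val t i == val s i)%:R.
Proof. by rewrite mxE !enum_rankK. Qed.

Lemma map_incidence (F F' : nzRingType) (f : {rmorphism F -> F'}) (T : {fset P}) :
  map_mx f (incidence F T) = incidence F' T.
Proof.
by apply/matrixP => j k; rewrite !mxE; case: (enum_val k) => i s; rewrite rmorph_nat.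
Qed.

Lemma mul_row_incidence (F : nzRingType) (T : {fset P}) (v : 'rV[F]_#|{: T}|)
    (i : 'I_n) (s : T) :
  (v *m incidence F T) 0 (enum_rank (i, s)) =
  \sum_(t : T | val t i == val s i) v 0 (enum_rank t).
Proof.
rewrite mxE sum_enum_rank [RHS]big_mkcond /=.
by apply: eq_bigr => t _; rewrite incidenceE; case: eqP; rewrite ?mulr1 ?mulr0.
Qed.

Lemma vanishes_trivial_row_free (T : {fset P}) :
  (forall c, vanishes T c -> {in T, forall y, c y = 0}) -> row_free (incidence rat T).
Proof.
move=> trivT; apply: inj_row_free => v vA0.
have [d d_neq0 [c cE]] := rat_clear_denominators (fun j => v 0 j).
have Tc : vanishes T (extend0 (fun t : T => c (enum_rank t))).
  move=> i a; rewrite big_seq_fsetE /=; apply: (@intr_inj rat).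
  have [s /eqP sa|noa] := pickP (fun t : T => val t i == a); last by rewrite big_pred0.
  rewrite rmorph_sum -sa /=; under eq_bigr do rewrite extend0E cE.
  by rewrite -mulr_suml -mul_row_incidence vA0 mxE mul0r.
apply/rowP => j; rewrite mxE; apply: (mulIf d_neq0); rewrite mul0r -cE.
by rewrite -[j]enum_valK -(extend0E (fun t : T => c (enum_rank t))) trivT ?fsvalP.
Qed.

End Vanishing.

Section Goodness.
Variables (R : realFieldType) (n : nat) (X : 'I_n -> choiceType).
Local Notation P := (point X).

Lemma vanishes_sum_eq0 (T : {fset P}) (c : P -> int) (u : forall i, X i -> R) :
  vanishes T c -> \sum_(y <- T) (c y)%:~R * \sum_(i < n) u i (y i) = 0.
Proof.
move=> Tc; under eq_bigr do rewrite mulr_sumr.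
rewrite exchange_big big1 //= => i _.
rewrite (partition_big_imfset _ (fun y : P => y i)) big1 //= => a _.
rewrite (eq_bigr (fun y => (c y)%:~R * u i a)) => [|y /eqP-> //].
by rewrite -mulr_suml -rmorph_sum Tc mul0r.
Qed.

Lemma good_orthogonal_eq0 (M : {fset P}) (nu : P -> R) : good R M ->
  (forall u : forall i, X i -> R, \sum_(y <- M) nu y * \sum_(i < n) u i (y i) = 0) ->
  {in M, forall y, nu y = 0}.
Proof.
(* [nu] itself is in U(M), so [nu] is orthogonal to itself. *)
move=> gM nu_perp y yM; have [u nuE] := gM (fun t : M => nu (val t)).
have nu2 : \sum_(t : M) nu (val t) ^+ 2 = 0.
  rewrite -[RHS](nu_perp u) (big_seq_fsetE _ _ predT) /=.
  by apply: eq_bigr => t _; rewrite -nuE.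
apply/eqP; rewrite -sqrf_eq0; apply/eqP.
by apply: (psumr_eq0P _ nu2 (i := [` yM])) => // t _; rewrite sqr_ge0.
Qed.

Lemma good_vanishes_eq0 (M : {fset P}) (c : P -> int) : good R M -> vanishes M c ->
  {in M, forall y, c y = 0}.
Proof.
move=> gM Mc y yM; apply/eqP; rewrite -(intr_eq0 R); apply/eqP.
apply: (good_orthogonal_eq0 (nu := fun y => (c y)%:~R)) gM _ y yM => u.
exact: vanishes_sum_eq0.
Qed.

Lemma row_free_incidence_good (T : {fset P}) : row_free (incidence R T) -> good R T.
Proof.
move=> /row_freeP[B AB] f; pose w := B *m \col_j f (enum_val j).
exists (fun i a => \sum_(t : T) (a == val t i)%:R * w (enum_rank (i, t)) 0) => x.
have -> : f x = (incidence R T *m w) (enum_rank x) 0.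
  by rewrite mulmxA AB mul1mx mxE enum_rankK.
rewrite mxE sum_enum_rank [RHS]pair_bigA /=.
by apply: eq_bigr => -[i t] _; rewrite incidenceE.
Qed.

Lemma goodP (T : {fset P}) :
  good R T <-> forall c : P -> int, vanishes T c -> {in T, forall y, c y = 0}.
Proof.
split=> [gT c|/vanishes_trivial_row_free]; first exact: good_vanishes_eq0.
(* The incidence matrix is rational, so its rank is the same over [rat] and [R]. *)
by rewrite -(@row_free_map _ _ (@ratr R)) map_incidence; apply: row_free_incidence_good.
Qed.

Lemma not_good_vanishes (T : {fset P}) : ~ good R T ->
  exists c : P -> int, vanishes T c /\ exists2 y, y \in T & c y != 0.
Proof.
move=> ngT; apply: NNPP => no_c; apply/ngT/goodP => c Tc y yT.
by apply/eqP/negPn/negP => cy; apply: no_c; exists c; split; last exists y.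
Qed.

Section OnePointExtension.
Variables (M : {fset P}) (x : P).
Hypothesis gM : good R M.

Lemma vanishes_fset1U_eq0 (c : P -> int) : vanishes (x |` M) c -> c x = 0 ->
  {in x |` M, forall y, c y = 0}.
Proof.
move=> Tc cx y /fset1UP[-> //|yM]; apply: (good_vanishes_eq0 gM) yM.
by apply/(vanishes_fsubset (fsubsetU1 x M)) => // z /fset1UP[-> //|->].
Qed.

Lemma vanishes_fset1U_proportional (c d : P -> int) :
  vanishes (x |` M) c -> vanishes (x |` M) d ->
  {in x |` M, forall y, c x * d y = d x * c y}.
Proof.
move=> Tc Td y yT; apply/eqP; rewrite -subr_eq0; apply/eqP.
apply: (vanishes_fset1U_eq0 (c := fun y => c x * d y - d x * c y)) yT.
  by move=> i a; rewrite sumrB -!mulr_sumr Tc Td !mulr0 subrr.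
by rewrite mulrC subrr.
Qed.

Lemma vanishes_fset1U_supp (c d : P -> int) :
  vanishes (x |` M) c -> vanishes (x |` M) d -> c x != 0 -> d x != 0 ->
  {in x |` M, forall y, (c y == 0) = (d y == 0)}.
Proof.
move=> Tc Td cx dx y yT.
have : (c x * d y == 0) = (d x * c y == 0) by rewrite vanishes_fset1U_proportional.
by rewrite !mulf_eq0 (negbTE cx) (negbTE dx) /= => ->.
Qed.

Lemma is_loop_supp (c : P -> int) : vanishes (x |` M) c -> c x != 0 ->
  is_loop [fset y in x |` M | c y != 0].
Proof.
move=> Tc cx; set L := [fset y in _ | _].
have memL y : (y \in L) = (y \in x |` M) && (c y != 0) by apply: in_fset_sep.
have LT : L `<=` x |` M by apply/fsubsetP => y; rewrite memL => /andP[].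
have Lc : vanishes L c.
  by apply/(vanishes_fsubset LT) => // y yT; rewrite memL yT negbK => /eqP.
split.
- by apply/fset0Pn; exists x; rewrite memL fset1U1.
- by exists c; split=> // y; rewrite memL => /andP[].
move=> L' /fset0Pn[z zL'] L'L [c' [c'_neq0 L'c']].
have L'T := fsubset_trans (fproper_sub L'L) LT.
pose d y := if y \in L' then c' y else 0.
have Td : vanishes (x |` M) d := vanishes_extend L'T L'c'.
have dx : d x != 0.
  apply: contra_neq (c'_neq0 z zL') => /(vanishes_fset1U_eq0 Td).
  by move/(_ z (fsubsetP L'T z zL')); rewrite /d zL'.
suff : L `<=` L' by move: L'L; rewrite fproperE => /andP[_ /negP].
apply/fsubsetP => y; rewrite memL => /andP[yT cy].
have : d y != 0 by rewrite -(vanishes_fset1U_supp Tc Td cx dx yT).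
by rewrite /d; case: (y \in L'); rewrite ?eqxx.
Qed.

Lemma loop_eq_supp (L : {fset P}) (c : P -> int) :
  is_loop L -> x \in L -> L `<=` x |` M ->
  vanishes (x |` M) c -> c x != 0 -> L = [fset y in x |` M | c y != 0].
Proof.
move=> [_ [cL [cL_neq0 LcL]] _] xL LT Tc cx.
pose d y := if y \in L then cL y else 0.
have Td : vanishes (x |` M) d := vanishes_extend LT LcL.
have dx : d x != 0 by rewrite /d xL cL_neq0.
apply/fsetP => y; rewrite in_fset_sep; case yT: (y \in x |` M) => /=; last first.
  by apply: contraFF yT => /(fsubsetP LT).
rewrite (vanishes_fset1U_supp Tc Td cx dx yT) /d.
by case: ifP => yL; rewrite ?cL_neq0 ?eqxx.
Qed.

End OnePointExtension.

Section AdmissibleLoops.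
Variables (S M : {fset P}).
Hypothesis maxM : maximal_good R S M.

Lemma admissible_loop_nonM_eq (L : {fset P}) (y z : P) : admissible_loop S M L ->
  y \in L -> y \notin M -> z \in L -> z \notin M -> y = z.
Proof.
case=> _ [x [_ _ _ LxM]]; have eqx w : w \in L -> w \notin M -> w = x.
  move=> wL wM; apply/eqP; apply: contraNT wM => wx.
  by apply: (fsubsetP LxM); rewrite in_fsetD1 wx.
by move=> yL yM zL zM; rewrite (eqx y yL yM) (eqx z zL zM).
Qed.

Lemma admissible_loop_fsubset1U (L : {fset P}) (x : P) : admissible_loop S M L ->
  x \in L -> x \notin M -> L `<=` x |` M.
Proof.
move=> AL xL xM; have [_ [x0 [_ x0M x0L Lx0M]]] := AL.
by rewrite -fsubDset (admissible_loop_nonM_eq AL xL xM x0L x0M).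
Qed.

Lemma admissible_loop_fsubset (L : {fset P}) : admissible_loop S M L -> L `<=` S.
Proof.
move=> AL; have [_ [x [xS xM xL _]]] := AL; have [MS _ _] := maxM.
apply: fsubset_trans (admissible_loop_fsubset1U AL xL xM) _.
by rewrite fsubUset fsub1set xS.
Qed.

Lemma admissible_loop_eq (L1 L2 : {fset P}) (x : P) :
  admissible_loop S M L1 -> admissible_loop S M L2 ->
  x \in L1 -> x \in L2 -> x \notin M -> L1 = L2.
Proof.
move=> AL1 AL2 xL1 xL2 xM; have [_ gM _] := maxM.
have [[_ [c [c_neq0 L1c]] _] _] := AL1.
have L1T := admissible_loop_fsubset1U AL1 xL1 xM.
have Td := vanishes_extend L1T L1c.
have dx : (if x \in L1 then c x else 0) != 0 by rewrite xL1 c_neq0.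
rewrite (loop_eq_supp gM AL1.1 xL1 L1T Td dx).
by rewrite (loop_eq_supp gM AL2.1 xL2 _ Td dx) // (admissible_loop_fsubset1U AL2).
Qed.

Lemma exists_admissible_loop (x : P) : x \in S -> x \notin M ->
  exists2 L, admissible_loop S M L & x \in L.
Proof.
move=> xS xM; have [MS gM M_max] := maxM.
have [c [Tc [y yT cy]]] : exists c : P -> int,
    vanishes (x |` M) c /\ exists2 y, y \in x |` M & c y != 0.
  apply/not_good_vanishes/M_max; last by rewrite fsubUset fsub1set xS.
  by rewrite fproperE fsubsetU1 fsubUset fsub1set (negbTE xM).
have cx : c x != 0.
  by apply: contra_neq cy => cx0; apply: (vanishes_fset1U_eq0 gM Tc cx0).
exists [fset y in x |` M | c y != 0]; last by rewrite in_fset_sep fset1U1.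
split; first exact: is_loop_supp.
exists x; split=> //; first by rewrite in_fset_sep fset1U1.
by rewrite fsubDset; apply/fsubsetP => z; rewrite in_fset_sep => /andP[].
Qed.

End AdmissibleLoops.

Lemma loop_measure_exists (S L : {fset P}) : is_loop L ->
  exists mu : C R S, is_loop_measure L mu.
Proof.
move=> [L0 [c [c_neq0 Lc]] _].
have [c' [c'_neq0 Lc' c'_prim]] := vanishes_primitive L0 c_neq0 Lc.
exists [ffun y : S => if val y \in L
          then (c' (val y))%:~R / (\sum_(z <- L) `|c' z|%N)%:R else 0].
by exists c'; split=> // y; rewrite ffunE.
Qed.

Lemma loop_measure_neq0 (S L : {fset P}) (mu : C R S) : is_loop_measure L mu ->
  forall z : S, (mu z != 0) = (val z \in L).
Proof.
move=> [c [c_neq0 _ _ muE]] z; rewrite muE; case: ifP => [zL|_]; last by rewrite eqxx.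
rewrite mulf_neq0 ?intr_eq0 ?c_neq0 // invr_eq0 pnatr_eq0.
by rewrite (big_fsetD1 _ zL) /= addn_eq0 absz_eq0 negb_and c_neq0.
Qed.

Lemma loop_measure_inUperp (S L : {fset P}) (mu : C R S) : L `<=` S ->
  is_loop_measure L mu -> inUperp mu.
Proof.
move=> LS [c [_ Lc _ muE]] f [u fE]; set k : R := (\sum_(y <- L) `|c y|%N)%:R.
transitivity (\sum_(y <- S)
    (if y \in L then (c y)%:~R / k else 0) * \sum_(i < n) u i (y i)).
  rewrite /integrate (big_seq_fsetE _ _ predT) /=.
  by apply: eq_bigr => y _; rewrite muE fE.
rewrite -(big_fset_incl _ LS) => [|y _ /negbTE->]; last by rewrite mul0r.
transitivity (k^-1 * \sum_(y <- L) (c y)%:~R * \sum_(i < n) u i (y i)).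
  rewrite mulr_sumr big_seq [RHS]big_seq; apply: eq_bigr => y yL.
  by rewrite yL mulrAC mulrC.
by rewrite vanishes_sum_eq0 ?mulr0.
Qed.

Lemma inUperpB (S : {fset P}) (mu nu : C R S) :
  inUperp mu -> inUperp nu -> inUperp (mu - nu).
Proof.
move=> mu_perp nu_perp f fU; have := mu_perp f fU; have := nu_perp f fU.
rewrite /integrate => nu0 mu0; under eq_bigr do rewrite !ffunE mulrBl.
by rewrite sumrB mu0 nu0 subrr.
Qed.

Lemma inUperp_span (S : {fset P}) (s : seq (C R S)) :
  {in s, forall v, inUperp v} -> forall v, v \in <<s>>%VS -> inUperp v.
Proof.
move=> s_perp v /(coord_span (X := in_tuple s))-> f fU; rewrite /integrate.
under eq_bigr do rewrite sum_ffunE mulr_suml.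
rewrite exchange_big big1 //= => i _.
under eq_bigr do rewrite ffunE -mulrA.
by rewrite -mulr_sumr [X in _ * X](s_perp _ (mem_nth 0 (ltn_ord i)) f fU) mulr0.
Qed.

Lemma span_eval_eq0 (S : {fset P}) (s : seq (C R S)) (z : S) :
  {in s, forall v : C R S, v z = 0} -> forall v, v \in <<s>>%VS -> v z = 0.
Proof.
move=> s0 v /(coord_span (X := in_tuple s))->; rewrite sum_ffunE big1 // => i _.
by rewrite ffunE s0 ?scaler0 //; apply: mem_nth.
Qed.

Lemma inUperp_eq0 (S M : {fset P}) (nu : C R S) : M `<=` S -> good R M -> inUperp nu ->
  (forall z : S, val z \notin M -> nu z = 0) -> nu = 0.
Proof.
move=> MS gM nu_perp nu0; apply/ffunP => z; rewrite ffunE -(extend0E nu).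
have [zM|zM] := boolP (val z \in M); last by rewrite extend0E nu0.
apply: (good_orthogonal_eq0 gM) zM => u.
rewrite (big_fset_incl _ MS) => [|y yS yM]; last first.
  by rewrite -[y]/(val [` yS]) extend0E nu0 ?mul0r.
pose f := [ffun t : S => \sum_(i < n) u i (val t i)].
have fU : inU f by exists u => t; rewrite ffunE.
rewrite (big_seq_fsetE _ _ predT) /= -[RHS](nu_perp f fU).
by apply: eq_bigr => t _; rewrite extend0E ffunE.
Qed.

Section LoopBasis.
Variables (S M : {fset P}) (Ls : seq {fset P}) (mu : {fset P} -> C R S).
Hypotheses (maxM : maximal_good R S M) (Ls_uniq : uniq Ls)
  (LsP : forall L, L \in Ls <-> admissible_loop S M L)
  (muP : forall L, admissible_loop S M L -> is_loop_measure L (mu L)).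

(* [fset0] is a junk value, for points on no loop of [Ls]. *)
Let loop_at (y : P) : {fset P} := nth fset0 Ls (find (fun L : {fset P} => y \in L) Ls).

Let loop_atP (y : P) : y \in S -> y \notin M -> loop_at y \in Ls /\ y \in loop_at y.
Proof.
move=> yS yM; have [L /LsP LLs yL] := exists_admissible_loop maxM yS yM.
have has_y : has (fun L : {fset P} => y \in L) Ls by apply/hasP; exists L.
by split; [rewrite mem_nth // -has_find | exact: (nth_find fset0 has_y)].
Qed.

Let loop_at_eq (L : {fset P}) (y : P) :
  L \in Ls -> y \in L -> y \notin M -> loop_at y = L.
Proof.
move=> /LsP AL yL yM; have yS := fsubsetP (admissible_loop_fsubset maxM AL) y yL.
have [/LsP ALy yLy] := loop_atP yS yM.
exact: (admissible_loop_eq maxM ALy AL yLy yL yM).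
Qed.

Let perm_loop_at : perm_eq [seq loop_at y | y <- S `\` M] Ls.
Proof.
apply: uniq_perm => //.
  rewrite map_inj_in_uniq ?fset_uniq // => y z.
  rewrite !in_fsetD => /andP[yM yS] /andP[zM zS] yz.
  have [/LsP ALy yLy] := loop_atP yS yM; have [_ zLz] := loop_atP zS zM.
  by apply: admissible_loop_nonM_eq ALy yLy yM _ zM; rewrite yz.
move=> L; apply/mapP/idP => [[y]|LLs].
  by rewrite in_fsetD => /andP[yM yS] ->; case: (loop_atP yS yM).
have [AL [x [xS xM xL _]]] := (LsP L).1 LLs.
by exists x; [rewrite in_fsetD xM | rewrite (loop_at_eq LLs xL xM)].
Qed.

Lemma size_admissible_loops : size Ls = (#|` S| - #|` M|)%N.
Proof.
have [MS _ _] := maxM.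
by rewrite -cardfsDS // -(perm_size perm_loop_at) size_map.
Qed.

Lemma free_loop_measures : free [seq mu L | L <- Ls].
Proof.
suff free_sub Ls' : uniq Ls' -> {subset Ls' <= Ls} -> free [seq mu L | L <- Ls'].
  exact: free_sub.
elim: Ls' => [|L Ls' IH] /=; first by rewrite nil_free.
move=> /andP[LLs' Ls'_uniq] Ls'_sub; rewrite free_cons IH ?andbT //; last first.
  by move=> L' L'Ls'; apply: Ls'_sub; rewrite inE L'Ls' orbT.
have /LsP AL : L \in Ls by apply: Ls'_sub; rewrite mem_head.
have [_ [x [xS xM xL _]]] := AL.
have Ls'_x0 : {in [seq mu L | L <- Ls'], forall v : C R S, v [` xS] = 0}.
  move=> _ /mapP[L' L'Ls' ->].
  have /LsP AL' : L' \in Ls by apply: Ls'_sub; rewrite inE L'Ls' orbT.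
  apply/eqP; rewrite -[_ == 0]negbK (loop_measure_neq0 (muP AL')) /=.
  by apply: contraNN LLs' => xL'; rewrite (admissible_loop_eq maxM AL AL' xL xL' xM).
apply/negP => /(span_eval_eq0 Ls'_x0)/eqP.
by rewrite -[_ == 0]negbK (loop_measure_neq0 (muP AL)) /= xL.
Qed.

Let mu_loop_at_neq0 (y z : S) : val y \notin M -> val z \notin M ->
  (mu (loop_at (val y)) z != 0) = (z == y).
Proof.
move=> yM zM; have [/LsP ALy yLy] := loop_atP (fsvalP y) yM.
rewrite (loop_measure_neq0 (muP ALy)); apply/idP/eqP => [zLy|->//].
exact/val_inj/(admissible_loop_nonM_eq ALy zLy zM yLy yM).
Qed.

Lemma span_loop_measures (m : C R S) :
  m \in <<[seq mu L | L <- Ls]>>%VS <-> inUperp m.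
Proof.
have span_perp : forall v, v \in <<[seq mu L | L <- Ls]>>%VS -> inUperp v.
  apply: inUperp_span => _ /mapP[L /LsP AL ->].
  exact: loop_measure_inUperp (admissible_loop_fsubset maxM AL) (muP AL).
split=> [|m_perp]; first exact: span_perp.
(* Off M, [mu (loop_at z)] charges only [z], so [w] agrees with [m] off M. *)
pose w := \sum_(z : S | val z \notin M)
  (m z / mu (loop_at (val z)) z) *: mu (loop_at (val z)).
have w_span : w \in <<[seq mu L | L <- Ls]>>%VS.
  apply: memv_suml => z zM; apply/memvZ/memv_span/map_f.
  exact: (loop_atP (fsvalP z) zM).1.
suff -> : m = w by [].
have [MS gM _] := maxM; apply/eqP; rewrite -subr_eq0; apply/eqP.
apply: (inUperp_eq0 MS gM (inUperpB m_perp (span_perp w w_span))) => z0 z0M.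
rewrite !ffunE sum_ffunE (bigD1 z0) //= big1 => [|z /andP[zM zz0]]; last first.
  move: (mu_loop_at_neq0 zM z0M); rewrite [z0 == _]eq_sym (negbTE zz0).
  by rewrite ffunE => /negbFE/eqP->; rewrite scaler0.
(* Scaling in [R^o] is multiplication. *)
by rewrite ffunE addr0 -[_ *: _]/(_ * _) divfK ?subrr // mu_loop_at_neq0.
Qed.

End LoopBasis.

End Goodness.

Theorem theorem4 (R : realFieldType) (n : nat) (X : 'I_n -> choiceType)
    (Xne : forall i : 'I_n, X i) (S M : {fset point X}) :
  maximal_good R S M ->
  exists V : {vspace C R S},
    [/\ forall mu : C R S, mu \in V <-> inUperp mu,
        \dim V = (#|` S| - #|` M|)%N,
        exists Ls : seq {fset point X},
          uniq Ls /\ forall L, L \in Ls <-> admissible_loop S M L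
      & forall (Ls : seq {fset point X}) (mu : {fset point X} -> C R S),
          uniq Ls ->
          (forall L, L \in Ls <-> admissible_loop S M L) ->
          (forall L, admissible_loop S M L -> is_loop_measure L (mu L)) ->
          basis_of V [seq mu L | L <- Ls]].
Proof.
(* No point of the product is needed, so [Xne] is unused. *)
move=> maxM.
have [Ls0 [Ls0_uniq Ls0P]] : exists Ls : seq {fset point X},
    uniq Ls /\ forall L, L \in Ls <-> admissible_loop S M L.
  apply: (@fset_enum_prop _ (fpowerset S)) => L /(admissible_loop_fsubset maxM).
  by rewrite fpowersetE.
have [mu0 mu0P] : exists mu : {fset point X} -> C R S,
    forall L, admissible_loop S M L -> is_loop_measure L (mu L).
  apply: (choice (fun L mu => admissible_loop S M L -> is_loop_measure L mu)) => L.
  have [[loopL _]|notAL] := classic (admissible_loop S M L).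
    by have [mu muL] := loop_measure_exists R S loopL; exists mu.
  by exists 0 => /notAL.
exists <<[seq mu0 L | L <- Ls0]>>%VS; split.
- exact: span_loop_measures maxM Ls0P mu0P.
- rewrite (eqP (free_loop_measures maxM Ls0_uniq Ls0P mu0P)) size_map.
  exact: size_admissible_loops maxM Ls0_uniq Ls0P.
- by exists Ls0.
move=> Ls mu Ls_uniq LsP muP.
rewrite /basis_of (free_loop_measures maxM Ls_uniq LsP muP) andbT.
apply/eqP/vspaceP => m; apply/idP/idP.
  by move/(span_loop_measures maxM LsP muP m)/(span_loop_measures maxM Ls0P mu0P m).
by move/(span_loop_measures maxM Ls0P mu0P m)/(span_loop_measures maxM LsP muP m).
Qed.
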